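(* Let $A$ be a partial ring. If $a_1,a_2,a\in A$ and $(a_1\dotplus a_2,\,a)\in R(A)$, then $(a_1,a_2)\in A_2$ and $a_1+a_2=a$.
   Context: A partial ring is a set $A$ with $0$, a set $A_2\subseteq A\times A$ of summable pairs and a partial addition $+\colon A_2\to A$ ($0$ a unit summable with everything; commutative; associative in the sense: $(a,b),(a+b,c)\in A_2$ iff $(b,c),(a,b+c)\in A_2$, and then $(a+b)+c=a+(b+c)$), together with a commutative associative multiplication with unit $1$ such that $0\cdot a=0$ and $(a_1,a_2)\in A_2\Rightarrow(a_1x,a_2x)\in A_2$, $(a_1+a_2)x=a_1x+a_2x$. Let $\mathbb{N}[A]$ be the monoid semiring of the multiplicative monoid of $A$; additively it is the free commutative monoid on the underlying set of $A$, with elements written $b_1\dotplus\cdots\dotplus b_r$ (the empty sum, denoted $\emptyset$, is its additive zero, distinct from the element $0\in A$). Let $R_1(A)=\{(0\dotplus x,\,x),\ (a_1\dotplus a_2\dotplus x,\,(a_1+a_2)\dotplus x) : (a_1,a_2)\in A_2,\ x\in\mathbb{N}[A]\}$, and let $R(A)$ be the smallest equivalence relation on $\mathbb{N}[A]$ containing $R_1(A)$. *)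

From Stdlib Require Import List Permutation Relations.
Import ListNotations.

(* Partial addition is encoded as a total function into option:
   (a,b) \in A_2  <->  padd a b <> None, and then padd a b = Some (a+b). *)
Definition obind {X Y : Type} (f : X -> option Y) (o : option X) : option Y :=
  match o with Some x => f x | None => None end.

Record PartialRing := {
  carrier :> Type;
  pzero : carrier;
  pone : carrier;
  padd : carrier -> carrier -> option carrier;
  pmul : carrier -> carrier -> carrier;
  padd0 : forall a, padd pzero a = Some a;
  paddC : forall a b, padd a b = padd b a;
  (* associativity: (a,b),(a+b,c) in A2 iff (b,c),(a,b+c) in A2, and then
     (a+b)+c = a+(b+c) *)
  paddA : forall a b c,
      obind (fun s => padd s c) (padd a b) = obind (fun t => padd a t) (padd b c);
  pmulC : forall a b, pmul a b = pmul b a;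
  pmulA : forall a b c, pmul a (pmul b c) = pmul (pmul a b) c;
  pmul1 : forall a, pmul pone a = a;
  pmul0 : forall a, pmul pzero a = pzero;
  pmulDl : forall a1 a2 s x, padd a1 a2 = Some s ->
      padd (pmul a1 x) (pmul a2 x) = Some (pmul s x)
}.

(* Elements of N[A] (the free commutative monoid on the underlying set of A)
   are represented by lists [b1; ...; br] standing for b1 ∔ ... ∔ br; two lists
   represent the same element of N[A] iff they are permutations of each other.
   The empty list is the empty sum ∅ (distinct from [pzero]). *)
Definition NA (A : PartialRing) := list (carrier A).

(* R_1(A), with x ∔ y represented by list concatenation x ++ y. *)
Inductive R1 (A : PartialRing) : NA A -> NA A -> Prop :=
| R1_zero : forall x : NA A, R1 A (pzero A :: x) x
| R1_add : forall (a1 a2 s : carrier A) (x : NA A),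
    padd A a1 a2 = Some s -> R1 A (a1 :: a2 :: x) (s :: x).

(* R(A): the smallest equivalence relation on N[A] containing R_1(A).
   On the list representation, this is the smallest equivalence relation
   containing R_1 and the identification of lists up to permutation
   (i.e. equality in N[A]). *)
Definition R1perm (A : PartialRing) (x y : NA A) : Prop :=
  R1 A x y \/ Permutation x y.

Definition RA (A : PartialRing) : NA A -> NA A -> Prop :=
  clos_refl_sym_trans (NA A) (R1perm A).

From Stdlib Require Import List Permutation Relations.
Import ListNotations.

(* Evaluating a formal sum b1 ∔ ... ∔ br with the partial addition of A gives a
   map N[A] -> option A (None when some partial sum is undefined).  The unit and
   associativity axioms make it constant on the pairs of R_1(A), associativity
   and commutativity make it invariant under reordering, so it is constant on
   R(A)-classes.  On a1 ∔ a2 it is padd a1 a2, on a it is Some a. *)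

Section PartialSum.

Variable A : PartialRing.

Fixpoint psum (x : NA A) : option A :=
  match x with
  | [] => Some (pzero A)
  | b :: x => obind (padd A b) (psum x)
  end.

Lemma padd0r (a : A) : padd A a (pzero A) = Some a.
Proof. rewrite paddC; apply padd0. Qed.

Lemma psum_pair (a1 a2 : A) : psum [a1; a2] = padd A a1 a2.
Proof. simpl; rewrite padd0r; reflexivity. Qed.

Lemma psum_singleton (a : A) : psum [a] = Some a.
Proof. simpl; apply padd0r. Qed.

Lemma psum_R1 (x y : NA A) : R1 A x y -> psum x = psum y.
Proof.
  intros [x' | a1 a2 s x' Hs]; simpl; destruct (psum x') as [t|]; simpl;
    try reflexivity.
  - apply padd0.
  - pose proof (paddA A a1 a2 t) as E; rewrite Hs in E; simpl in E.
    symmetry; exact E.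
Qed.

Lemma psum_perm (x y : NA A) : Permutation x y -> psum x = psum y.
Proof.
  induction 1 as [| b x y _ IH | b c x | x y z _ IHxy _ IHyz]; simpl.
  - reflexivity.
  - rewrite IH; reflexivity.
  - destruct (psum x) as [t|]; simpl; [|reflexivity].
    (* b + (c + t) = (b + c) + t = (c + b) + t = c + (b + t) *)
    pose proof (paddA A b c t) as Ebc; pose proof (paddA A c b t) as Ecb.
    rewrite paddC in Ecb; rewrite Ecb in Ebc; exact Ebc.
  - congruence.
Qed.

Lemma psum_RA (x y : NA A) : RA A x y -> psum x = psum y.
Proof.
  induction 1 as [x y [H | H] | | |]; try congruence.
  - apply psum_R1; exact H.
  - apply psum_perm; exact H.
Qed.

End PartialSum.

Theorem mainTheorem16 (A : PartialRing) (a1 a2 a : carrier A) :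
  RA A [a1; a2] [a] -> padd A a1 a2 = Some a.
Proof.
  intros H.
  rewrite <- psum_pair, <- psum_singleton.
  apply psum_RA; exact H.
Qed.
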